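(* In the setting of the context, for distinct $p,a\in C$, $\operatorname{diam}_{S_p}(\pi_p(a))\le 4\delta$. In particular Axiom (P1) holds for the data $(\{S_p\}_{p\in C},\{\pi_p\})$ with any constant $\theta\ge4\delta$.
   Context: $X$ is a $\delta$-hyperbolic geodesic metric space ($\delta>0$, every geodesic triangle $\delta$-thin). $G$ acts on $X$ by isometries and $\mathcal{C}=(C,\{G_c\})$ is a $\rho$-separated fairly rotating family with $\rho\ge20\delta$ (i.e. $C\subseteq X$ is $G$-invariant, $G_c$ fixes $c$, $G_{gc}=gG_cg^{-1}$, distinct points of $C$ are at distance $\ge\rho$, and for $c\in C$, $g\in G_c\setminus\{1\}$, $x\in C\setminus\{c\}$ some geodesic from $x$ to $gx$ meets the closed $1$-ball about $c$). Fix $2+2\delta\le R\le\frac\rho2-3\delta$. For $p\in C$, $S_p=\{x:d(x,p)=R\}$ with metric $d_{S_p}(x,y)=$ infimum of lengths of paths from $x$ to $y$ in $X\setminus B_R(p)$ (possibly $\infty$), where $B_R(p)$ is the open ball. For $a$ with $d(a,p)\ge R$, $\pi_p(a)\subseteq S_p$ is the set of points where geodesics $[p,a]$ meet $S_p$ (equivalently nearest-point projections of $a$ to $S_p$). *)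

From Stdlib Require Import Reals Lra List Sorting.Sorted.
From Coquelicot Require Import Rbar Lub.
Open Scope R_scope.
Set Implicit Arguments.

Section Geometry.
Variable X : Type.
Variable d : X -> X -> R.

Record is_metric : Prop := {
  met_refl : forall x, d x x = 0;
  met_sep : forall x y, d x y = 0 -> x = y;
  met_sym : forall x y, d x y = d y x;
  met_tri : forall x y z, d x z <= d x y + d y z }.

Definition geodesic (g : R -> X) (x y : X) : Prop :=
  g 0 = x /\ g (d x y) = y /\
  forall s t, 0 <= s <= d x y -> 0 <= t <= d x y -> d (g s) (g t) = Rabs (s - t).

Definition geodesic_space : Prop :=
  forall x y, exists g, geodesic g x y.

Definition gromov_product (x y z : X) : R := (d x y + d x z - d y z) / 2.

(* every geodesic triangle is delta-thin (insize / tripod-map definition):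
   on the two sides issuing from any vertex x, points at the same distance
   t <= (y|z)_x from x are delta-close. *)
Definition thin_triangles (delta : R) : Prop :=
  forall x y z g1 g2, geodesic g1 x y -> geodesic g2 x z ->
    forall t, 0 <= t <= gromov_product x y z -> d (g1 t) (g2 t) <= delta.

Definition open_ball (p : X) (r : R) (x : X) : Prop := d x p < r.

Definition sphere (p : X) (r : R) (x : X) : Prop := d x p = r.

Definition path_continuous (gam : R -> X) : Prop :=
  forall t, 0 <= t <= 1 -> forall eps, 0 < eps -> exists eta, 0 < eta /\
    forall s, 0 <= s <= 1 -> Rabs (s - t) < eta -> d (gam s) (gam t) < eps.

Fixpoint chain_sum (gam : R -> X) (l : list R) : R :=
  match l with
  | a :: ((b :: _) as tl) => d (gam a) (gam b) + chain_sum gam tl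
  | _ => 0
  end.

Definition path_length (gam : R -> X) : Rbar :=
  Lub_Rbar (fun s => exists l : list R,
    Sorted Rle l /\ (forall t, In t l -> 0 <= t <= 1) /\ s = chain_sum gam l).

(* d_{S_p}(x,y) : infimum of lengths of paths from x to y in X \ B_r(p);
   +oo if there is no such path of finite length *)
Definition sphere_dist (p : X) (r : R) (x y : X) : Rbar :=
  Glb_Rbar (fun l => exists gam : R -> X,
    path_continuous gam /\ gam 0 = x /\ gam 1 = y /\
    (forall t, 0 <= t <= 1 -> ~ open_ball p r (gam t)) /\
    path_length gam = Finite l).

Definition proj (p : X) (r : R) (a : X) (x : X) : Prop :=
  exists g, geodesic g p a /\ x = g r.

Definition sphere_diam_le (p : X) (r : R) (A : X -> Prop) (c : R) : Prop :=
  forall x y, A x -> A y -> Rbar_le (sphere_dist p r x y) (Finite c).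

End Geometry.

Record is_group (G : Type) (mul : G -> G -> G) (e : G) (inv : G -> G) : Prop := {
  grp_assoc : forall a b c, mul a (mul b c) = mul (mul a b) c;
  grp_idl : forall a, mul e a = a;
  grp_idr : forall a, mul a e = a;
  grp_invl : forall a, mul (inv a) a = e;
  grp_invr : forall a, mul a (inv a) = e }.

Record is_subgroup (G : Type) (mul : G -> G -> G) (e : G) (inv : G -> G)
  (H : G -> Prop) : Prop := {
  sub_e : H e;
  sub_mul : forall a b, H a -> H b -> H (mul a b);
  sub_inv : forall a, H a -> H (inv a) }.

Record isometric_action (X G : Type) (d : X -> X -> R) (mul : G -> G -> G) (e : G)
  (act : G -> X -> X) : Prop := {
  act_e : forall x, act e x = x;
  act_mul : forall g h x, act (mul g h) x = act g (act h x);
  act_isom : forall g x y, d (act g x) (act g y) = d x y }.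

Record fairly_rotating_family (X G : Type) (d : X -> X -> R) (mul : G -> G -> G)
  (e : G) (inv : G -> G) (act : G -> X -> X) (C : X -> Prop) (Gc : X -> G -> Prop)
  (rho : R) : Prop := {
  frf_invariant : forall g c, C c -> C (act g c);
  frf_subgroup : forall c, C c -> is_subgroup mul e inv (Gc c);
  frf_fix : forall c g, C c -> Gc c g -> act g c = c;
  frf_conj : forall c g h, C c ->
      (Gc (act g c) h <-> exists k, Gc c k /\ h = mul (mul g k) (inv g));
  frf_sep : forall c c', C c -> C c' -> c <> c' -> rho <= d c c';
  frf_rot : forall c g x, C c -> Gc c g -> g <> e -> C x -> x <> c ->
      exists gm, geodesic d gm x (act g x) /\
        exists t, 0 <= t <= d x (act g x) /\ d (gm t) c <= 1 }.

From Stdlib Require Import Reals Lra List Sorting.Sorted.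
From Coquelicot Require Import Rbar Lub.
Open Scope R_scope.
Set Implicit Arguments.

(* Let x = g1 R0 and y = g2 R0 lie on two geodesics g1, g2 from p to a, and
   put m = R0 + delta/2.  Since d(p,a) >= m, delta-thinness of the degenerate
   triangle (p,a,a) gives d(g1 m, g2 m) <= delta.  The detour
     x --g1--> g1 m --h--> g2 m --g2--> y   (h a geodesic)
   stays outside the open ball B_R0(p): on the g_i-pieces the distance to p
   is the geodesic parameter, and on h it is at least m - delta/2 = R0.
   Parametrising each of the three pieces on an interval of length 1/3 makes
   the detour 3*delta-Lipschitz on [0,1], hence of length <= 3*delta. *)

Section MetricGeodesicSpace.
Variable X : Type.
Variable d : X -> X -> R.
Hypothesis d_metric : is_metric d.

Definition lipschitz_on (gam : R -> X) (K a b : R) : Prop :=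
  forall s t, a <= s <= b -> a <= t <= b -> d (gam s) (gam t) <= K * Rabs (s - t).

Lemma lipschitz_glue f f' K a u b :
  lipschitz_on f K a u -> lipschitz_on f' K u b -> f u = f' u ->
  lipschitz_on (fun s => if Rle_dec s u then f s else f' s) K a b.
Proof.
  intros Hf Hf' Ejunction s t Hs Ht.
  assert (Hsplit : forall s t, s <= u <= t ->
            Rabs (s - t) = Rabs (s - u) + Rabs (u - t))
    by (intros; split_Rabs; lra).
  destruct (Rle_dec s u), (Rle_dec t u).
  - apply Hf; lra.
  - assert (A := Hf s u ltac:(lra) ltac:(lra)).
    assert (B := Hf' u t ltac:(lra) ltac:(lra)).
    assert (T := met_tri d_metric (f s) (f u) (f' t)). rewrite Ejunction in A, T.
    rewrite (Hsplit s t) by lra; lra.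
  - assert (A := Hf' s u ltac:(lra) ltac:(lra)).
    assert (B := Hf u t ltac:(lra) ltac:(lra)).
    assert (T := met_tri d_metric (f' s) (f' u) (f t)). rewrite <- Ejunction in A, T.
    rewrite (Rabs_minus_sym s t), (Hsplit t s), Rabs_minus_sym,
      (Rabs_minus_sym u s) by lra; lra.
  - apply Hf'; lra.
Qed.

Lemma geodesic_affine_lipschitz g x y al be K a b :
  geodesic d g x y -> Rabs be <= K ->
  (forall s, a <= s <= b -> 0 <= al + be * s <= d x y) ->
  lipschitz_on (fun s => g (al + be * s)) K a b.
Proof.
  intros [_ [_ Hg]] HK Hrange s t Hs Ht.
  rewrite Hg by (apply Hrange; lra).
  replace (al + be * s - (al + be * t)) with (be * (s - t)) by ring.
  rewrite Rabs_mult. apply Rmult_le_compat_r; [apply Rabs_pos | lra].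
Qed.

Lemma chain_sum_lipschitz gam K : 0 <= K -> lipschitz_on gam K 0 1 ->
  forall l a, Sorted Rle (a :: l) -> (forall t, In t (a :: l) -> 0 <= t <= 1) ->
  chain_sum d gam (a :: l) <= K * (1 - a).
Proof.
  intros HK Hlip l. induction l as [|b l IH]; intros a Hsorted Hin.
  - assert (0 <= a <= 1) by (apply Hin; simpl; auto). simpl; nra.
  - change (d (gam a) (gam b) + chain_sum d gam (b :: l) <= K * (1 - a)).
    apply Sorted_inv in Hsorted as [Hsorted Hhead]. inversion Hhead; subst.
    assert (Ha : 0 <= a <= 1) by (apply Hin; simpl; auto).
    assert (Hb : 0 <= b <= 1) by (apply Hin; simpl; auto).
    assert (Htail := IH b Hsorted ltac:(intros t Ht; apply Hin; simpl; auto)).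
    assert (Hstep := Hlip a b Ha Hb). rewrite Rabs_left1 in Hstep by lra. nra.
Qed.

Lemma path_length_lipschitz gam K : 0 <= K -> lipschitz_on gam K 0 1 ->
  exists l, path_length d gam = Finite l /\ l <= K.
Proof.
  intros HK Hlip. unfold path_length.
  set (chains := fun s => exists l : list R,
    Sorted Rle l /\ (forall t, In t l -> 0 <= t <= 1) /\ s = chain_sum d gam l).
  destruct (Lub_Rbar_correct chains) as [Hub Hleast].
  assert (Hge0 : Rbar_le (Finite 0) (Lub_Rbar chains)).
  { apply Hub. exists nil. split; [constructor|]. split; [intros t [] | reflexivity]. }
  assert (HleK : Rbar_le (Lub_Rbar chains) (Finite K)).
  { apply Hleast. intros s [l [Hsorted [Hin ->]]]. simpl.
    destruct l as [|a l]; [simpl; lra|].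
    assert (A := chain_sum_lipschitz HK Hlip Hsorted Hin).
    assert (0 <= a <= 1) by (apply Hin; simpl; auto). nra. }
  destruct (Lub_Rbar chains) as [r | |]; simpl in Hge0, HleK; try contradiction.
  exists r; split; [reflexivity | exact HleK].
Qed.

Lemma lipschitz_continuous gam K : 0 <= K -> lipschitz_on gam K 0 1 ->
  path_continuous d gam.
Proof.
  intros HK Hlip t Ht eps Heps. exists (eps / (K + 1)). split.
  - apply Rdiv_lt_0_compat; lra.
  - intros s Hs Hst. assert (A := Hlip s t Hs Ht).
    apply Rmult_lt_compat_r with (r := K + 1) in Hst; [|lra].
    unfold Rdiv in Hst. rewrite Rmult_assoc, Rinv_l, Rmult_1_r in Hst by lra.
    assert (0 <= Rabs (s - t)) by apply Rabs_pos. nra.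
Qed.

Lemma sphere_dist_le_lipschitz p r x y gam K :
  0 <= K -> lipschitz_on gam K 0 1 -> gam 0 = x -> gam 1 = y ->
  (forall t, 0 <= t <= 1 -> ~ open_ball d p r (gam t)) ->
  Rbar_le (sphere_dist d p r x y) (Finite K).
Proof.
  intros HK Hlip H0 H1 Havoid.
  destruct (path_length_lipschitz HK Hlip) as [l [Hl HlK]].
  unfold sphere_dist.
  match goal with |- Rbar_le (Glb_Rbar ?E) _ =>
    destruct (Glb_Rbar_correct E) as [Hlb _] end.
  apply Rbar_le_trans with (Finite l); [|simpl; lra].
  apply Hlb. exists gam.
  repeat split; auto. exact (lipschitz_continuous HK Hlip).
Qed.

Lemma geodesic_dist_source g x y s :
  geodesic d g x y -> 0 <= s <= d x y -> d (g s) x = s.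
Proof.
  intros [Hg0 [_ Hg]] Hs. rewrite <- Hg0, Hg by lra.
  rewrite Rminus_0_r, Rabs_pos_eq; lra.
Qed.

Lemma geodesic_between_spheres h u v p m t :
  geodesic d h u v -> d u p = m -> d v p = m -> 0 <= t <= d u v ->
  m - d u v / 2 <= d (h t) p.
Proof.
  intros Hh Hu Hv Ht.
  destruct Hh as [Hh0 [Hh1 Hh]].
  assert (Du : d u (h t) = t)
    by (rewrite <- Hh0 at 1; rewrite Hh by lra; rewrite Rabs_left1; lra).
  assert (Dv : d v (h t) = d u v - t)
    by (rewrite <- Hh1 at 1; rewrite Hh by lra; rewrite Rabs_pos_eq; lra).
  assert (Tu := met_tri d_metric u (h t) p).
  assert (Tv := met_tri d_metric v (h t) p).
  lra.
Qed.

Lemma dist_nonneg x y : 0 <= d x y.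
Proof.
  assert (T := met_tri d_metric x y x).
  rewrite (met_refl d_metric), (met_sym d_metric y) in T. lra.
Qed.

(* In a delta-thin space, two geodesics with the same endpoints are
   delta-close at equal parameters (thinness of the triangle (x, y, y)). *)
Lemma geodesics_same_ends_close delta g1 g2 x y t :
  thin_triangles d delta -> geodesic d g1 x y -> geodesic d g2 x y ->
  0 <= t <= d x y -> d (g1 t) (g2 t) <= delta.
Proof.
  intros Hthin G1 G2 Ht. apply (Hthin x y y g1 g2 G1 G2).
  unfold gromov_product. rewrite (met_refl d_metric y). lra.
Qed.

End MetricGeodesicSpace.

Lemma proj_sphere_diam_3delta (X : Type) (d : X -> X -> R) (delta r : R) p a :
  is_metric d -> geodesic_space d -> thin_triangles d delta ->
  0 <= delta -> 0 <= r -> r + delta / 2 <= d p a ->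
  sphere_diam_le d p r (proj d p r a) (3 * delta).
Proof.
  intros Hm Hgs Hthin Hdelta Hr Hfar x y [g1 [G1 ->]] [g2 [G2 ->]].
  set (m := r + delta / 2).
  destruct (Hgs (g1 m) (g2 m)) as [h Hh].
  set (L := d (g1 m) (g2 m)).
  assert (HL : L <= delta)
    by (apply (geodesics_same_ends_close Hm Hthin G1 G2); unfold m; lra).
  assert (HL0 : 0 <= L) by apply (dist_nonneg Hm).
  assert (Dg1 : forall s, 0 <= s <= m -> d (g1 s) p = s)
    by (intros; apply (geodesic_dist_source G1); unfold m in *; lra).
  assert (Dg2 : forall s, 0 <= s <= m -> d (g2 s) p = s)
    by (intros; apply (geodesic_dist_source G2); unfold m in *; lra).
  (* The three pieces of the detour, each on an interval of length 1/3:
     g1 on [r, m], h on [0, L], and g2 on [r, m] traversed backwards. *)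
  set (f1 := fun s => g1 (r + (3 * delta / 2) * s)).
  set (f2 := fun s => h (- L + (3 * L) * s)).
  set (f3 := fun s => g2 ((r + 3 * delta / 2) + (- (3 * delta / 2)) * s)).
  set (f12 := fun s => if Rle_dec s (1/3) then f1 s else f2 s).
  set (gam := fun s => if Rle_dec s (2/3) then f12 s else f3 s).
  assert (Hh0 : h 0 = g1 m) by apply Hh.
  assert (Hh1 : h L = g2 m) by apply Hh.
  assert (Hlip : lipschitz_on d gam (3 * delta) 0 1).
  { apply lipschitz_glue; [exact Hm | apply lipschitz_glue; [exact Hm | | |] | |].
    - apply (geodesic_affine_lipschitz G1); [rewrite Rabs_pos_eq; lra|].
      intros; unfold m in *; nra.
    - apply (geodesic_affine_lipschitz Hh); [rewrite Rabs_pos_eq; lra|].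
      intros; fold L; nra.
    - unfold f1, f2. replace (- L + 3 * L * (1/3)) with 0 by field.
      rewrite Hh0. f_equal. unfold m; field.
    - apply (geodesic_affine_lipschitz G2); [rewrite Rabs_left1; lra|].
      intros; unfold m in *; nra.
    - unfold f12. destruct (Rle_dec (2/3) (1/3)); [lra|].
      unfold f2, f3. replace (- L + 3 * L * (2/3)) with L by field.
      rewrite Hh1. f_equal. unfold m; field. }
  apply (sphere_dist_le_lipschitz (K := 3 * delta) ltac:(lra) Hlip).
  - unfold gam, f12. destruct (Rle_dec 0 (2/3)); [|lra].
    destruct (Rle_dec 0 (1/3)); [|lra]. unfold f1. f_equal; ring.
  - unfold gam. destruct (Rle_dec 1 (2/3)); [lra|]. unfold f3. f_equal; field.
  - intros t Ht. unfold open_ball, gam, f12.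
    destruct (Rle_dec t (2/3)); [destruct (Rle_dec t (1/3))|].
    + unfold f1. rewrite Dg1; unfold m; nra.
    + unfold f2.
      assert (Hmid : m - L / 2 <= d (h (- L + 3 * L * t)) p).
      { apply (geodesic_between_spheres Hm p Hh);
          [apply Dg1 | apply Dg2 | fold L; nra]; unfold m; lra. }
      unfold m in Hmid. lra.
    + unfold f3. rewrite Dg2; unfold m; nra.
Qed.

Lemma sphere_diam_le_mono (X : Type) (d : X -> X -> R) p r A c c' :
  c <= c' -> sphere_diam_le d p r A c -> sphere_diam_le d p r A c'.
Proof.
  intros Hc Hdiam x y Hx Hy.
  apply Rbar_le_trans with (Finite c); [exact (Hdiam x y Hx Hy) | simpl; lra].
Qed.

Unset Implicit Arguments.

Theorem lemma3p3 (X G : Type) (d : X -> X -> R) (delta rho R0 : R)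
  (mul : G -> G -> G) (e : G) (inv : G -> G) (act : G -> X -> X)
  (C : X -> Prop) (Gc : X -> G -> Prop) :
  is_metric d -> geodesic_space d -> 0 < delta -> thin_triangles d delta ->
  is_group mul e inv -> isometric_action d mul e act ->
  fairly_rotating_family d mul e inv act C Gc rho -> 20 * delta <= rho ->
  2 + 2 * delta <= R0 -> R0 <= rho / 2 - 3 * delta ->
  (forall p a, C p -> C a -> p <> a ->
     sphere_diam_le d p R0 (proj d p R0 a) (4 * delta)) /\
  (forall theta, 4 * delta <= theta ->
     forall p a, C p -> C a -> p <> a ->
       sphere_diam_le d p R0 (proj d p R0 a) theta).
Proof.
  intros Hm Hgs Hdelta Hthin _ _ Hfrf _ HR_lo HR_hi.
  (* Distinct points of C are rho-apart, and rho >= 2*R0 + 6*delta. *)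
  assert (Hdiam : forall p a, C p -> C a -> p <> a ->
            sphere_diam_le d p R0 (proj d p R0 a) (4 * delta)).
  { intros p a Cp Ca Hpa.
    assert (Hsep := frf_sep Hfrf Cp Ca Hpa).
    apply (sphere_diam_le_mono (c := 3 * delta)); [lra|].
    apply proj_sphere_diam_3delta; auto; lra. }
  split; [exact Hdiam|].
  intros theta Htheta p a Cp Ca Hpa.
  exact (sphere_diam_le_mono Htheta (Hdiam p a Cp Ca Hpa)).
Qed.
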